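(* For every $n\in\mathbb{N}$, the directed arrowhead $\vec{\mathcal{AT}}_n$ has oriented diameter $\vec{D}_n=\sqrt{N}-1=2^n-1$, where $N=4^n$. Moreover, the number of vertices at directed distance $\vec{D}_n$ from $(0,0)$ is $3$ when $n=1$ and $6$ when $n>1$.
   Context: For $n\in\mathbb{N}$ let $G_n=\mathbb{Z}_{2^n}\times\mathbb{Z}_{2^n}$ (additive group), $N=|G_n|=4^n$. Let $S^+=\{(-1,-1),(1,0),(0,1)\}$. The directed arrowhead $\vec{\mathcal{AT}}_n$ is the Cayley digraph $\Gamma(G_n,S^+)$: vertex set $G_n$, with an arc $u\to u+s$ for each $u\in G_n$ and $s\in S^+$ (arithmetic modulo $2^n$). The oriented diameter is the maximum, over ordered pairs $(u,v)$ of vertices, of the length of a shortest directed path from $u$ to $v$. *)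

From mathcomp Require Import all_boot.
Set Implicit Arguments. Unset Strict Implicit. Unset Printing Implicit Defensive.

Lemma two_pow_gt0 n : 0 < 2 ^ n.
Proof. by rewrite expn_gt0. Qed.

(* Z_{2^n}, represented as 'I_(2^n) with arithmetic modulo 2^n. *)
Definition modo (n k : nat) : 'I_(2 ^ n) := Ordinal (ltn_pmod k (two_pow_gt0 n)).

Definition vtx (n : nat) : finType := ('I_(2 ^ n) * 'I_(2 ^ n))%type.

Definition origin (n : nat) : vtx n := (modo n 0, modo n 0).

(* Arcs of the directed arrowhead: u -> u + s, s in {(-1,-1),(1,0),(0,1)};
   -1 is represented as 2^n - 1 (mod 2^n). *)
Definition arc (n : nat) : rel (vtx n) := fun u v =>
  [|| v == (modo n (u.1 + (2 ^ n - 1)), modo n (u.2 + (2 ^ n - 1))),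
      v == (modo n (u.1 + 1), u.2)
    | v == (u.1, modo n (u.2 + 1))].

Definition reach (n : nat) (u v : vtx n) (k : nat) : bool :=
  [exists p : k.-tuple (vtx n), path (@arc n) u p && (last u p == v)].

(* Directed distance: least k with a walk of length k from u to v
   (searched among k < #|V|; equals #|V| if v is unreachable from u). *)
Definition ddist (n : nat) (u v : vtx n) : nat :=
  find (reach u v) (iota 0 #|vtx n|).

Definition odiam (n : nat) : nat := \max_(u : vtx n) \max_(v : vtx n) ddist u v.

(* Since the group is abelian, a walk is determined up to reordering by the
   numbers a, b, c of its steps (-1,-1), (1,0), (0,1).  Reaching the offset
   (x, y) therefore costs min_a (a + (x + a) mod 2^n + (y + a) mod 2^n), and
   as a function of a < 2^n this cost grows with slope 3 except at the two
   wrap-around points a = 2^n - x and a = 2^n - y, so the minimum is one of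
   three explicit linear expressions.  Because 3 does not divide 2^n, one of
   them is always below 2^n, and the offsets for which all three reach 2^n - 1
   are six points near (2^n/3) (2, 1) and (2^n/3) (1, 2) (only three for n = 1). *)

From Pilot Require Import Defs.
From mathcomp Require Import all_boot zify.
Set Implicit Arguments. Unset Strict Implicit. Unset Printing Implicit Defensive.

Lemma eq_modn_offset d x y x' y' i j : x = y %[mod d] ->
  x' + y + i * d = y' + x + j * d -> x' = y' %[mod d].
Proof.
move=> exy e; apply/eqP; rewrite -(eqn_modDr y) -[(y' + y) %% d]modnDmr -exy modnDmr.
by rewrite -(modnMDl i) -(modnMDl j (y' + x)) !(addnC (_ * d)) e.
Qed.

Lemma eqn_mod_shift d p q x a b : p + x = q %[mod d] ->
  (q + a == p + b %[mod d]) = (b == x + a %[mod d]).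
Proof. by move=> e; rewrite -modnDml -e modnDml -addnA eqn_modDl eq_sym. Qed.

Lemma modn_lt_double m z : z < m.*2 -> z %% m = if z < m then z else z - m.
Proof.
move=> lt_z2m; case: ltnP => [/modn_small //|le_mz].
by rewrite -{1}(subnK le_mz) modnDr modn_small //; lia.
Qed.

Lemma three_ndvd_pow2 n : ~~ (3 %| 2 ^ n).
Proof. by rewrite Euclid_dvdX. Qed.

(* Length of the shortest walk to offset (x, y) in Z_m x Z_m that uses exactly
   a steps (-1,-1). *)
Definition walk_cost (m x y a : nat) : nat := a + (x + a) %% m + (y + a) %% m.

Section WalkCost.
Variable m : nat.
Implicit Types x y a d : nat.

Lemma walk_costC x y a : walk_cost m x y a = walk_cost m y x a.
Proof. by rewrite /walk_cost addnAC. Qed.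

Lemma walk_cost_modn x y a : walk_cost m x y (a %% m) <= walk_cost m x y a.
Proof. by rewrite /walk_cost !modnDmr !leq_add2r leq_mod. Qed.

Lemma walk_cost_lt_sqr x y a : a < m -> walk_cost m x y a < m * m.
Proof.
move=> a_lt; have m_gt0 : 0 < m by lia.
have := ltn_pmod (x + a) m_gt0; have := ltn_pmod (y + a) m_gt0.
have : 3 * m <= m * m + 2 by case: (leqP m 1); nia.
rewrite /walk_cost; lia.
Qed.

Lemma walk_cost0 x y : x < m -> y < m -> walk_cost m x y 0 = x + y.
Proof. by move=> x_lt y_lt; rewrite /walk_cost !addn0 !modn_small. Qed.

Lemma walk_cost_wrap x y : x < m -> y < m -> walk_cost m x y (m - x) =
  m - x + (if x <= y then y - x else y + m - x).
Proof.
move=> x_lt y_lt; rewrite /walk_cost subnKC ?(ltnW x_lt) // modnn addn0.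
by rewrite modn_lt_double; [congr (_ + _); do 2 case: ifP | ]; lia.
Qed.

Lemma walk_cost_wrapC x y : x < m -> y < m -> walk_cost m x y (m - y) =
  m - y + (if y <= x then x - y else x + m - y).
Proof. by move=> x_lt y_lt; rewrite walk_costC walk_cost_wrap. Qed.

Lemma walk_cost_wrap_min x y a : x < m -> y < m -> a < m ->
  [|| walk_cost m x y 0 <= walk_cost m x y a,
      walk_cost m x y (m - x) <= walk_cost m x y a
    | walk_cost m x y (m - y) <= walk_cost m x y a].
Proof.
move=> x_lt y_lt a_lt.
rewrite walk_cost0 // walk_cost_wrap // walk_cost_wrapC // /walk_cost.
by rewrite !modn_lt_double; try lia; do 4 case: ifP; lia.
Qed.

Lemma walk_cost_geP x y d : x < m -> y < m ->
  (forall a, d <= walk_cost m x y a) <->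
  [/\ d <= x + y, d <= m - x + (if x <= y then y - x else y + m - x)
    & d <= m - y + (if y <= x then x - y else x + m - y)].
Proof.
move=> x_lt y_lt.
rewrite -walk_cost0 // -walk_cost_wrap // -walk_cost_wrapC //.
split=> [d_le|[d0 dx dy] a]; first by split; apply: d_le.
have a_lt : a %% m < m by rewrite ltn_pmod //; lia.
apply: leq_trans (walk_cost_modn x y a).
by case/or3P: (walk_cost_wrap_min x_lt y_lt a_lt); apply: leq_trans.
Qed.

Lemma walk_cost_lt_exists x y : ~~ (3 %| m) -> x < m -> y < m ->
  exists a, walk_cost m x y a < m.
Proof.
move=> m3 x_lt y_lt.
suff : [|| walk_cost m x y 0 < m, walk_cost m x y (m - x) < m
         | walk_cost m x y (m - y) < m] by case/or3P; eexists; eassumption.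
rewrite walk_cost0 // walk_cost_wrap // walk_cost_wrapC //.
by do 2 case: ifP; lia.
Qed.

End WalkCost.

Definition antipodal (m x y : nat) : Prop := forall a, m - 1 <= walk_cost m x y a.

(* t and s are m / 3 rounded down and to the nearest integer.  For m = 2 the
   list contains (1, 1) twice and two pairs outside the grid. *)
Definition antipodes (m : nat) : seq (nat * nat) :=
  let t := m %/ 3 in let s := (m + 1) %/ 3 in
  [:: (2 * t + 1, t); (2 * t + 1, t + 1); (2 * s, s);
      (t, 2 * t + 1); (t + 1, 2 * t + 1); (s, 2 * s)].

Lemma antipodalP m x y : ~~ (3 %| m) -> x < m -> y < m ->
  antipodal m x y <-> (x, y) \in antipodes m.
Proof.
move=> m3 x_lt y_lt; rewrite /antipodal walk_cost_geP // /antipodes.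
set t := m %/ 3; set s := (m + 1) %/ 3.
have t_s : m = 3 * t + 1 /\ s = t \/ m = 3 * t + 2 /\ s = t + 1 by lia.
clearbody t s; rewrite !inE; split; last first.
  by rewrite !xpair_eqE => mem; case: (ltngtP x y) => /=; split; lia.
case: (ltngtP x y) => [xy|yx|<-] /= [h0 hx hy].
- have : y = 2 * t + 1 /\ x = t \/ y = 2 * t + 1 /\ x = t + 1 \/
         y = 2 * s /\ x = s by lia.
  by case=> [[-> ->]|[[-> ->]|[-> ->]]]; rewrite ?eqxx ?orbT.
- have : x = 2 * t + 1 /\ y = t \/ x = 2 * t + 1 /\ y = t + 1 \/
         x = 2 * s /\ y = s by lia.
  by case=> [[-> ->]|[[-> ->]|[-> ->]]]; rewrite ?eqxx ?orbT.
- rewrite subnn addn0 in hx.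
  have : x = 2 * t + 1 /\ x = t + 1 \/ x = 2 * s /\ x = s by lia.
  by case=> [[e1 e2]|[e1 e2]]; rewrite -e1 -e2 eqxx ?orbT.
Qed.

Section Walks.
Variable n : nat.
Local Notation M := (2 ^ n).
Implicit Types u v w : vtx n.

Lemma reach0 u v : reach u v 0 = (u == v).
Proof.
apply/existsP/eqP => [[p /andP[_ /eqP <-]]|<-]; first by rewrite (tuple0 p).
by exists [tuple]; rewrite /=.
Qed.

Lemma reachS u v k : reach u v k.+1 = [exists w, Defs.arc u w && reach w v k].
Proof.
apply/existsP/existsP => [[p]|[w /andP[uw /existsP[p /andP[pp lp]]]]].
  case/tupleP: p => w p /=; rewrite -andbA => /and3P[uw pp lp].
  by exists w; rewrite uw; apply/existsP; exists p; rewrite pp.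
by exists [tuple of w :: p]; rewrite /= uw pp.
Qed.

Lemma reachP u v k : reach u v k <->
  exists a b c, [/\ a + b + c = k, v.1 + a = u.1 + b %[mod M]
                                 & v.2 + a = u.2 + c %[mod M]].
Proof.
have M_gt0 := two_pow_gt0 n.
case: v => v1 v2; elim: k u => [|k IHk] [u1 u2] /=.
  rewrite reach0; split=> [/eqP [-> ->]|[a [b [c [abc0]]]]]; first by exists 0, 0, 0.
  have [-> -> ->] : [/\ a = 0, b = 0 & c = 0] by split; lia.
  rewrite !addn0 !modn_small // => /val_inj -> /val_inj ->.
  exact: eqxx.
rewrite reachS; split.
  case/existsP => w /andP[uw /IHk [a [b [c [<- e1 e2]]]]].
  case/or3P: uw => /eqP ew; rewrite {}ew /= ?modnDml in e1 e2.
  - exists a.+1, b, c; split; first lia.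
    + by apply: (eq_modn_offset (i := 0) (j := 1) e1); lia.
    + by apply: (eq_modn_offset (i := 0) (j := 1) e2); lia.
  - exists a, b.+1, c; split; first lia; last exact: e2.
    by apply: (eq_modn_offset (i := 0) (j := 0) e1); lia.
  - exists a, b, c.+1; split; first lia; first exact: e1.
    by apply: (eq_modn_offset (i := 0) (j := 0) e2); lia.
case=> [[|a] [b [c [abc e1 e2]]]]; last first.
  apply/existsP; exists (modo n (u1 + (M - 1)), modo n (u2 + (M - 1))).
  rewrite /Defs.arc eqxx; apply/IHk; exists a, b, c; rewrite /= !modnDml.
  split; first lia.
  - by apply: (eq_modn_offset (i := 1) (j := 0) e1); lia.
  - by apply: (eq_modn_offset (i := 1) (j := 0) e2); lia.
case: b abc e1 => [|b] abc e1.
  case: c abc e2 => [//|c] abc e2.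
  apply/existsP; exists (u1, modo n (u2 + 1)); rewrite /Defs.arc eqxx !orbT.
  apply/IHk; exists 0, 0, c; rewrite /= modnDml; split=> //; first lia.
  by apply: (eq_modn_offset (i := 0) (j := 0) e2); lia.
apply/existsP; exists (modo n (u1 + 1), u2); rewrite /Defs.arc eqxx orbT.
apply/IHk; exists 0, b, c; rewrite /= modnDml; split=> //; first lia.
by apply: (eq_modn_offset (i := 0) (j := 0) e1); lia.
Qed.

Lemma card_vtx : #|vtx n| = M * M.
Proof. by rewrite card_prod card_ord. Qed.

Lemma ddist_leq u v k : reach u v k -> k < #|vtx n| -> ddist u v <= k.
Proof.
move=> r k_lt; rewrite leqNgt; apply/negP => lt_k.
by have := before_find 0 lt_k; rewrite nth_iota // add0n r.
Qed.

Lemma reach_ddist u v k : reach u v k -> k < #|vtx n| -> reach u v (ddist u v).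
Proof.
move=> r k_lt; have has_r : has (reach u v) (iota 0 #|vtx n|).
  by apply/hasP; exists k; rewrite ?mem_iota.
have := nth_find 0 has_r; rewrite nth_iota ?add0n //.
by rewrite -{2}(size_iota 0 #|vtx n|) -has_find.
Qed.

Lemma offset_exists (i j : 'I_M) : exists2 x, x < M & i + x = j %[mod M].
Proof.
exists ((j + (M - i)) %% M); first by rewrite ltn_pmod ?two_pow_gt0.
by rewrite modnDmr addnCA subnKC ?modnDr // ltnW.
Qed.

Section Offset.
Variables (u v : vtx n) (x y : nat).
Hypotheses (ux_v : u.1 + x = v.1 %[mod M]) (uy_v : u.2 + y = v.2 %[mod M]).

Lemma reach_offsetP k : reach u v k <->
  exists a b c, [/\ a + b + c = k, b = x + a %[mod M] & c = y + a %[mod M]].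
Proof.
rewrite reachP; split=> -[a [b [c [abc e1 e2]]]]; exists a, b, c; split=> //.
- by apply/eqP; rewrite -(eqn_mod_shift _ _ ux_v); apply/eqP.
- by apply/eqP; rewrite -(eqn_mod_shift _ _ uy_v); apply/eqP.
- by apply/eqP; rewrite (eqn_mod_shift _ _ ux_v); apply/eqP.
- by apply/eqP; rewrite (eqn_mod_shift _ _ uy_v); apply/eqP.
Qed.

Lemma reach_walk_cost a : reach u v (walk_cost M x y a).
Proof.
by apply/reach_offsetP; exists a, ((x + a) %% M), ((y + a) %% M); rewrite !modn_mod.
Qed.

Lemma walk_cost_leq_of_reach k : reach u v k -> exists a, walk_cost M x y a <= k.
Proof.
case/reach_offsetP => a [b [c [<- eb ec]]]; exists a.
by rewrite /walk_cost -eb -ec -!addnA leq_add2l leq_add ?leq_mod.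
Qed.

Lemma ddist_geP d : d <= ddist u v <-> forall a, d <= walk_cost M x y a.
Proof.
have cost_lt a : a < M -> walk_cost M x y a < #|vtx n|.
  by rewrite card_vtx; apply: walk_cost_lt_sqr.
split=> [d_le a|d_le].
  apply: leq_trans d_le (leq_trans _ (walk_cost_modn M x y a)).
  apply: ddist_leq (reach_walk_cost _) (cost_lt _ _).
  by rewrite ltn_pmod ?two_pow_gt0.
have cost0_lt := cost_lt 0 (two_pow_gt0 n).
have [a le_a] := walk_cost_leq_of_reach (reach_ddist (reach_walk_cost 0) cost0_lt).
exact: leq_trans (d_le a) le_a.
Qed.

End Offset.

Lemma reach_exists u v : exists k, reach u v k.
Proof.
have [x _ ux_v] := offset_exists u.1 v.1; have [y _ uy_v] := offset_exists u.2 v.2.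
by exists (walk_cost M x y 0); apply: reach_walk_cost.
Qed.

Lemma ddist_lt u v : ddist u v < M.
Proof.
have [x x_lt ux_v] := offset_exists u.1 v.1.
have [y y_lt uy_v] := offset_exists u.2 v.2.
have [a cost_lt] := walk_cost_lt_exists (three_ndvd_pow2 n) x_lt y_lt.
exact: leq_ltn_trans ((ddist_geP ux_v uy_v _).1 (leqnn _) a) cost_lt.
Qed.

Lemma ddist_origin_antipodal v :
  ddist (origin n) v = M - 1 <-> antipodal M v.1 v.2.
Proof.
have v1 : (origin n).1 + v.1 = v.1 %[mod M] by rewrite /= mod0n.
have v2 : (origin n).2 + v.2 = v.2 %[mod M] by rewrite /= mod0n.
rewrite /antipodal -(ddist_geP v1 v2); have := ddist_lt (origin n) v.
by split=> [->|]; lia.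
Qed.

Lemma antipodal_set : [set v : vtx n | ddist (origin n) v == M - 1] =
  [set v : vtx n | (v.1 : nat, v.2 : nat) \in antipodes M].
Proof.
apply/setP => v; rewrite !in_set.
have far_mem := antipodalP (three_ndvd_pow2 n) (ltn_ord v.1) (ltn_ord v.2).
have far_ddist := ddist_origin_antipodal v.
apply/eqP/idP => [far | mem]; first exact: far_mem.1 (far_ddist.1 far).
exact: far_ddist.2 (far_mem.2 mem).
Qed.

Lemma card_vtx_pairs (s : seq (nat * nat)) :
  #|[set v : vtx n | (v.1 : nat, v.2 : nat) \in s]| =
  size (undup [seq p <- s | (p.1 < M) && (p.2 < M)]).
Proof.
pose pr (v : vtx n) := (v.1 : nat, v.2 : nat).
have pr_inj : injective pr by move=> [a b] [c d] [/val_inj -> /val_inj ->].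
rewrite cardE -(size_map pr); apply/perm_size/uniq_perm.
- by rewrite map_inj_uniq ?enum_uniq.
- exact: undup_uniq.
move=> [a b]; rewrite mem_undup mem_filter.
apply/mapP/andP => [[v]|[/andP[a_lt b_lt] ab_s]].
  by rewrite mem_enum inE => v_s ->; rewrite !ltn_ord.
by exists (Ordinal a_lt, Ordinal b_lt); rewrite // mem_enum inE.
Qed.

Lemma odiam_eq : odiam n = M - 1.
Proof.
apply/eqP; rewrite eqn_leq; apply/andP; split.
  apply/bigmax_leqP => u _; apply/bigmax_leqP => v _.
  by have := ddist_lt u v; lia.
have [-> //|n_gt0] := posnP n.
pose t := M %/ 3; pose v : vtx n := (modo n (2 * t + 1), modo n t).
have M_ge2 : 2 <= M by rewrite -(expn1 2) leq_pexp2l.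
have M3 := three_ndvd_pow2 n.
have [t_lt t21_lt] : t < M /\ 2 * t + 1 < M by lia.
have v_far : ddist (origin n) v = M - 1.
  apply/ddist_origin_antipodal/(antipodalP M3 (ltn_ord _) (ltn_ord _)).
  by rewrite /= !modn_small // inE eqxx.
rewrite /odiam -v_far.
exact: leq_trans (leq_bigmax v) (leq_bigmax (origin n)).
Qed.

Lemma card_antipodal : 1 < n ->
  #|[set v : vtx n | ddist (origin n) v == M - 1]| = 6.
Proof.
move=> n_gt1; have M_ge4 : 4 <= M by rewrite -[4]/(2 ^ 2) leq_pexp2l.
have := three_ndvd_pow2 n.
rewrite antipodal_set card_vtx_pairs /antipodes.
set t := M %/ 3; set s := (M + 1) %/ 3.
move=> M3; have t_s : M = 3 * t + 1 /\ s = t \/ M = 3 * t + 2 /\ s = t + 1 by lia.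
clearbody t s.
rewrite (all_filterP _); last by rewrite /=; lia.
rewrite undup_id //= !inE !xpair_eqE.
by do ![apply/andP; split]; lia.
Qed.

End Walks.

Lemma card_antipodal1 : #|[set v : vtx 1 | ddist (origin 1) v == 2 ^ 1 - 1]| = 3.
Proof. by rewrite antipodal_set card_vtx_pairs. Qed.

Theorem proposition4 (n : nat) :
  (forall u v : vtx n, exists k, reach u v k) /\
  odiam n = 2 ^ n - 1 /\
  (n = 1 -> #|[set v : vtx n | ddist (origin n) v == odiam n]| = 3) /\
  (1 < n -> #|[set v : vtx n | ddist (origin n) v == odiam n]| = 6).
Proof.
rewrite odiam_eq; split; first exact: reach_exists.
by split=> //; split=> [-> | ]; [exact: card_antipodal1 | exact: card_antipodal].
Qed.
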